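(* Let $A\in\mathbb{R}^{m\times n}$ have no zero row, with rows $a_1^T,\dots,a_m^T$, let $b\in\mathbb{R}^m$ with $Ax=b$ consistent, and let $x^\dagger$ be the minimum-norm least-squares solution. Let $0<\mu_i<2$ for $1\le i\le m$, ${\bf u}=(\mu_1,\dots,\mu_m)$, $\Lambda=\mathrm{diag}(\mu_1,\dots,\mu_m)$, $M=\mathrm{diag}(1/\|a_1\|_2^2,\dots,1/\|a_m\|_2^2)$, and let $C({\bf u})\in\mathbb{R}^{m\times m}$ be a unit upper triangular matrix with $A_{\mathcal S}({\bf u})=C({\bf u})A$, where $A_{\mathcal S}({\bf u})=(Q_1({\bf u}_1)a_1,\dots,Q_m({\bf u}_m)a_m)^T$, $Q_j({\bf u}_j)=P_m(\mu_m)\cdots P_{j+1}(\mu_{j+1})$ for $j<m$, $Q_m({\bf u}_m)=I$, $P_k(\mu_k)=I-\mu_ka_ka_k^T/\|a_k\|_2^2$. Let $y_0\in\mathbb{R}^n$ and $$y_k=y_{k-1}+A^T[C({\bf u})]^T\Lambda M(b-Ay_{k-1}),\qquad k=1,2,\dots.$$ Then $y_k\to x^\dagger+P_{N(A)}y_0$ as $k\to\infty$.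
   Context: $P_{N(A)}$ is the orthogonal projection onto the null space of $A$. Such a matrix $C({\bf u})$ always exists. *)

From HB Require Import structures.
From mathcomp Require Import all_boot all_order all_algebra.
From mathcomp Require Import all_classical all_reals all_analysis.
Set Implicit Arguments. Unset Strict Implicit. Unset Printing Implicit Defensive.
Import Order.TTheory GRing.Theory Num.Theory.
Import numFieldNormedType.Exports.
Local Open Scope ring_scope.

Section Defs.
Variables (R : realType) (m n : nat).

Definition norm2sq (k : nat) (v : 'cV[R]_k) : R := \sum_i v i 0 ^+ 2.

Definition rownorm2 (A : 'M[R]_(m, n)) (i : 'I_m) : R := norm2sq (row i A)^T.

Definition Pk (A : 'M[R]_(m, n)) (mu : R) (k : 'I_m) : 'M[R]_n :=
  1%:M - (mu / rownorm2 A k) *: ((row k A)^T *m row k A).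

(* Q_j(u_j) = P_m(mu_m) ... P_{j+1}(mu_{j+1}) (identity if j is the last index) *)
Definition Qj (A : 'M[R]_(m, n)) (u : 'rV[R]_m) (j : 'I_m) : 'M[R]_n :=
  foldr (fun k Q => Pk A (u 0 k) k *m Q) 1%:M
        (rev [seq k <- enum 'I_m | (nat_of_ord j < nat_of_ord k)%N]).

Definition AS (A : 'M[R]_(m, n)) (u : 'rV[R]_m) : 'M[R]_(m, n) :=
  \matrix_(i, l) (Qj A u i *m (row i A)^T) l 0.

Definition unit_upper_triangular (C : 'M[R]_m) : Prop :=
  (forall i, C i i = 1) /\ (forall i j : 'I_m, (j < i)%N -> C i j = 0).

Definition ls_solution (A : 'M[R]_(m, n)) (b : 'cV[R]_m) (x : 'cV[R]_n) : Prop :=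
  forall z, norm2sq (A *m x - b) <= norm2sq (A *m z - b).

Definition min_norm_ls_solution (A : 'M[R]_(m, n)) (b : 'cV[R]_m)
  (x : 'cV[R]_n) : Prop :=
  ls_solution A b x /\ (forall z, ls_solution A b z -> norm2sq x <= norm2sq z).

Definition orth_proj_null (A : 'M[R]_(m, n)) (P : 'M[R]_n) : Prop :=
  forall v : 'cV[R]_n, A *m (P *m v) = 0 /\
    (forall w : 'cV[R]_n, A *m w = 0 -> w^T *m (v - P *m v) = 0).

End Defs.

(* The error [e_k = y_k - (x^+ + P_N y_0)] satisfies [e_(k+1) = P_m ... P_1 e_k]:
   since [A_S = C A], the gain [A^T C^T Lambda M A] telescopes to [I - P_m ... P_1].
   Each relaxed projection [P_j] lowers [|x|^2] by [mu_j (2 - mu_j) <a_j, x>^2 / |a_j|^2],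
   so the residuals met inside a sweep tend to zero along the iteration, and by
   triangularity so does [A e_k].  Finally [e_k] stays orthogonal to [N(A)] ([x^+] does
   by minimality of its norm, and the updates lie in the range of [A^T]), and on that
   complement [A] has a linear left inverse, so [e_k -> 0]. *)

Set Warnings "-notation-overridden,-ambiguous-paths,-notation-incompatible-prefix".
From HB Require Import structures.
From mathcomp Require Import all_boot all_order all_algebra.
From mathcomp Require Import all_classical all_reals all_analysis.
From mathcomp Require Import ring lra.
Import Order.TTheory GRing.Theory Num.Theory.
Import numFieldNormedType.Exports.
Set Implicit Arguments. Unset Strict Implicit. Unset Printing Implicit Defensive.
Local Open Scope ring_scope.
Local Open Scope classical_set_scope.

Section MatrixLimits.
Variable R : realType.

Lemma cvg_mx_entries (T : Type) (F : set_system T) (FF : Filter F) (p q : nat)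
    (f : T -> 'M[R]_(p, q)) (M : 'M[R]_(p, q)) :
  (forall i j, f x i j @[x --> F] --> M i j) -> f @ F --> M.
Proof.
move=> fM; apply/cvgrPdist_le => /= e e0; near=> x.
rewrite [leLHS]/Num.Def.normr/= mx_normrE (bigmax_le _ (ltW e0))//= => ij _.
move: ij; near: x; apply: filter_forall => /= ij.
by have /cvgrPdist_le /(_ e e0) := fM ij.1 ij.2; apply: filterS => x; rewrite !mxE.
Unshelve. all: by end_near. Qed.

Lemma cvg_mulmxl (T : Type) (F : set_system T) (FF : Filter F) (p q r : nat)
    (G : 'M[R]_(p, q)) (f : T -> 'M[R]_(q, r)) (M : 'M[R]_(q, r)) :
  f @ F --> M -> G *m f x @[x --> F] --> G *m M.
Proof.
move=> fM; apply: cvg_mx_entries => i j; rewrite mxE.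
under eq_cvg do rewrite mxE.
apply: (@cvg_big _ _ _ _ predT add_continuous) => l _.
apply: cvgMl_tmp.
exact: (cvg_comp _ _ fM (@coord_continuous _ _ _ l j M)).
Qed.

End MatrixLimits.

Section RealSequences.
Variable R : realType.

Lemma sqr_cvg0 (f : nat -> R) : (f k ^+ 2) @[k --> \oo] --> 0 -> f @ \oo --> 0.
Proof.
move=> /cvgr0Pnorm_lt f2; apply/cvgr0Pnorm_lt => e e0.
have := f2 (e ^+ 2) (exprn_gt0 2 e0); apply: filterS => k.
by rewrite normrX => fk; rewrite -(ltr_pXn2r (n:=2)) //; exact: ltW.
Qed.

Lemma decrements_cvg0 (v d : nat -> R) :
  (forall k, 0 <= v k) -> (forall k, 0 <= d k) -> (forall k, v k.+1 = v k - d k) ->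
  d @ \oo --> 0.
Proof.
move=> v_ge0 d_ge0 vS.
have v_cvg : cvgn v.
  apply: nonincreasing_is_cvgn.
    by apply/nonincreasing_seqP => k; rewrite vS gerBl.
  by exists 0 => _ [k _ <-].
have -> : d = fun k => v k - v k.+1.
  by apply: funext => k; rewrite vS opprB addrC subrK.
by rewrite -(subrr (limn v)); apply: cvgB => //; rewrite (cvg_shiftS v).
Qed.

Lemma weighted_sqr_sum_cvg0 (I : finType) (w : I -> R) (d : I -> nat -> R) :
  (forall i, 0 < w i) -> (\sum_i d i k ^+ 2 * w i) @[k --> \oo] --> 0 ->
  forall i, d i @ \oo --> 0.
Proof.
move=> w_gt0 sum_cvg i; apply: sqr_cvg0.
apply: (@squeeze_cvgr _ _ _ _ (fun=> 0) (fun k => (\sum_i d i k ^+ 2 * w i) / w i)).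
- near=> k; rewrite sqr_ge0 /= ler_pdivlMr // (bigD1 i) //= lerDl.
  by apply: sumr_ge0 => j _; rewrite mulr_ge0 ?sqr_ge0 ?ltW.
- exact: cvg_cst.
- by rewrite -[X in _ --> X](mul0r (w i)^-1); exact: cvgMr_tmp.
Unshelve. all: by end_near. Qed.

End RealSequences.

Section EuclideanNorm.
Variables (R : realType) (n : nat).
Implicit Types v w x a : 'cV[R]_n.

Definition dotv v w : R := \sum_l v l 0 * w l 0.

Lemma trmx_mul_dotv v w : v^T *m w = (dotv v w)%:M.
Proof.
apply/matrixP => i k; rewrite (ord1 i) (ord1 k) !mxE /= mulr1n.
by apply: eq_bigr => l _; rewrite !mxE.
Qed.

Lemma dotvE v w : dotv v w = (v^T *m w) 0 0.
Proof. by rewrite trmx_mul_dotv mxE mulr1n. Qed.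

Lemma dot0v w : dotv 0 w = 0.
Proof. by rewrite /dotv big1 // => l _; rewrite mxE mul0r. Qed.

Lemma norm2sq_dotv v : norm2sq v = dotv v v.
Proof. by apply: eq_bigr => l _; rewrite expr2. Qed.

Lemma norm2sq0 : norm2sq (0 : 'cV[R]_n) = 0.
Proof. by rewrite norm2sq_dotv dot0v. Qed.

Lemma norm2sq_ge0 v : 0 <= norm2sq v.
Proof. by apply: sumr_ge0 => l _; rewrite sqr_ge0. Qed.

Lemma norm2sq_eq0 v : norm2sq v = 0 -> v = 0.
Proof.
move=> v0; apply/matrixP => l j; rewrite (ord1 j) mxE.
have := @psumr_eq0P _ _ predT (fun l => v l 0 ^+ 2) (fun l _ => sqr_ge0 _) v0 l isT.
by move/eqP; rewrite sqrf_eq0 => /eqP.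
Qed.

Lemma trmx_mul_self_eq0 v : v^T *m v = 0 -> v = 0.
Proof. by move=> vv0; apply: norm2sq_eq0; rewrite norm2sq_dotv dotvE vv0 mxE. Qed.

Lemma norm2sq_sub_scale x a c :
  norm2sq (x - (c * dotv a x) *: a) =
  norm2sq x - dotv a x ^+ 2 * (2 * c - c ^+ 2 * norm2sq a).
Proof.
rewrite /norm2sq /dotv; under eq_bigr do rewrite !mxE.
set k := c * _.
transitivity (\sum_l x l 0 ^+ 2 - 2 * k * (\sum_l a l 0 * x l 0)
   + k ^+ 2 * (\sum_l a l 0 ^+ 2)).
  by rewrite !mulr_sumr -sumrB -big_split /=; apply: eq_bigr => l _; ring.
by rewrite /k; ring.
Qed.

End EuclideanNorm.

Lemma trmx_mul_diag_sum (R : comPzRingType) (k p q : nat) (X : 'M[R]_(k, p))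
    (d : 'rV[R]_k) (Y : 'M[R]_(k, q)) :
  X^T *m diag_mx d *m Y = \sum_i d 0 i *: ((row i X)^T *m row i Y).
Proof.
apply/matrixP => a b; rewrite summxE !mxE; apply: eq_bigr => i _.
by rewrite mul_mx_diag !mxE big_ord1 !mxE mulrCA mulrA.
Qed.

Section NullSpace.
Variables (R : realType) (m n : nat) (A : 'M[R]_(m, n)).
Implicit Types v w x : 'cV[R]_n.

Definition perp_ker v := forall w, A *m w = 0 -> w^T *m v = 0.

Lemma perp_kerD v w : perp_ker v -> perp_ker w -> perp_ker (v + w).
Proof. by move=> pv pw z Az0; rewrite mulmxDr pv // pw // addr0. Qed.

Lemma perp_kerN v : perp_ker v -> perp_ker (- v).
Proof. by move=> pv z Az0; rewrite mulmxN pv // oppr0. Qed.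

Lemma perp_ker_trmx_mul (s : 'cV[R]_m) : perp_ker (A^T *m s).
Proof. by move=> z Az0; rewrite mulmxA -trmx_mul Az0 trmx0 mul0mx. Qed.

Lemma ls_solution_consistent (b : 'cV[R]_m) x :
  (exists x0, A *m x0 = b) -> ls_solution A b x -> A *m x = b.
Proof.
move=> [x0 Ax0] xls; have := xls x0; rewrite Ax0 subrr norm2sq0 => le0.
have r0 : norm2sq (A *m x - b) = 0 by apply/le_anti; rewrite le0 norm2sq_ge0.
by apply/eqP; rewrite -subr_eq0; apply/eqP/norm2sq_eq0.
Qed.

(* Moving along [w] in the kernel keeps a least-squares solution; the step
   [- c <w, x> w] with [c = 1 / (|w|^2 + 1)] strictly shortens [x] unless [<w, x> = 0]. *)
Lemma min_norm_ls_perp_ker (b : 'cV[R]_m) x :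
  min_norm_ls_solution A b x -> perp_ker x.
Proof.
move=> [xls xmin] w Aw0; rewrite trmx_mul_dotv.
set d := dotv w x; set N := norm2sq w; set c := (N + 1)^-1.
have N_ge0 : 0 <= N by exact: norm2sq_ge0.
have c_gt0 : 0 < c by rewrite invr_gt0; lra.
have gain_gt0 : 0 < 2 * c - c ^+ 2 * N.
  have -> : 2 * c - c ^+ 2 * N = c + c ^+ 2.
    by rewrite /c; field; apply/eqP; lra.
  by rewrite addr_gt0 // exprn_gt0.
have shift_ls : ls_solution A b (x - (c * d) *: w).
  by move=> z; rewrite mulmxBr -scalemxAr Aw0 scaler0 subr0; exact: xls.
have := xmin _ shift_ls; rewrite norm2sq_sub_scale -/d -/N => le_x.
have : d ^+ 2 * (2 * c - c ^+ 2 * N) <= 0 by lra.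
rewrite pmulr_lle0 // => d2_le0.
have : d ^+ 2 = 0 by apply/le_anti; rewrite d2_le0 sqr_ge0.
by move/eqP; rewrite sqrf_eq0 => /eqP ->; rewrite raddf0.
Qed.

Variable PN : 'M[R]_n.
Hypothesis PN_proj : orth_proj_null A PN.

Lemma orth_proj_null_perp v : perp_ker v -> PN *m v = 0.
Proof.
move=> pv; have [APv0 perp_sub] := PN_proj v.
have := perp_sub _ APv0; rewrite mulmxBr (pv _ APv0) sub0r => /eqP.
by rewrite oppr_eq0 => /eqP /trmx_mul_self_eq0.
Qed.

Lemma orth_proj_null_ker w : A *m w = 0 -> PN *m w = w.
Proof.
move=> Aw0; have [APw0 perp_sub] := PN_proj w.
have A_sub0 : A *m (w - PN *m w) = 0 by rewrite mulmxBr Aw0 APw0 subr0.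
by move/trmx_mul_self_eq0/eqP: (perp_sub _ A_sub0); rewrite subr_eq0 => /eqP.
Qed.

(* [1 - PN] vanishes on the kernel of [A], hence factors through [A]. *)
Lemma perp_ker_factor :
  exists G : 'M[R]_(n, m), forall v, perp_ker v -> v = G *m (A *m v).
Proof.
have [G PN_G] : exists G : 'M[R]_(n, m), 1%:M - PN = G *m A.
  apply/submxP; rewrite submxE; apply/eqP/matrixP => i l.
  have Acoker : A *m col l (cokermx A) = 0.
    by rewrite colE mulmxA mulmx_coker mul0mx.
  have sub_coker : (1%:M - PN) *m col l (cokermx A) = 0.
    by rewrite mulmxBl mul1mx orth_proj_null_ker // subrr.
  transitivity ((col l ((1%:M - PN) *m cokermx A)) i 0); first by rewrite !mxE.
  by rewrite colE -mulmxA -colE sub_coker !mxE.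
exists G => v pv.
by rewrite mulmxA -PN_G mulmxBl mul1mx orth_proj_null_perp // subr0.
Qed.

End NullSpace.

Lemma filter_iota_geq (a k : nat) : (a <= k)%N ->
  [seq x <- iota 0 k | (a <= x)%N] = iota a (k - a).
Proof.
move=> ak; rewrite -{1}(subnKC ak) iotaD filter_cat add0n.
rewrite (eq_in_filter (a2 := pred0)); last first.
  by move=> x; rewrite mem_iota add0n => /andP[_ xa]; rewrite /= leqNgt xa.
rewrite filter_pred0 /= (eq_in_filter (a2 := predT)) ?filter_predT //.
by move=> x; rewrite mem_iota => /andP[-> _].
Qed.

Section Sweep.
Variables (R : realType) (m n : nat) (A : 'M[R]_(m, n)) (u : 'rV[R]_m).
Implicit Types v x : 'cV[R]_n.

(* Rows and relaxation parameters are indexed by [nat] and extended by zero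
   beyond [m], where the projections below become the identity. *)
Definition arow (i : nat) : 'cV[R]_n :=
  if (insub i : option 'I_m) is Some k then (row k A)^T else 0.
Definition relax_mu (i : nat) : R :=
  if (insub i : option 'I_m) is Some k then u 0 k else 0.
Definition relax (i : nat) : R := relax_mu i / norm2sq (arow i).
Definition proj (i : nat) : 'M[R]_n := 1%:M - relax i *: (arow i *m (arow i)^T).

(* [sweep a b = P_(a+b-1) ... P_(a+1) P_a] *)
Definition sweep (a b : nat) : 'M[R]_n :=
  foldr (fun k Q => proj k *m Q) 1%:M (rev (iota a b)).

Lemma arow_ord (k : 'I_m) : arow k = (row k A)^T.
Proof. by rewrite /arow valK. Qed.

Lemma relax_mu_ord (k : 'I_m) : relax_mu k = u 0 k.
Proof. by rewrite /relax_mu valK. Qed.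

Lemma Pk_proj (k : 'I_m) : Pk A (u 0 k) k = proj k.
Proof. by rewrite /proj /relax /Pk arow_ord relax_mu_ord trmxK. Qed.

Lemma sweep0 a : sweep a 0 = 1%:M.
Proof. by []. Qed.

Lemma sweepSr a b : sweep a b.+1 = proj (a + b) *m sweep a b.
Proof. by rewrite /sweep -addn1 iotaD rev_cat. Qed.

Lemma sweepSl a b : sweep a b.+1 = sweep a.+1 b *m proj a.
Proof.
rewrite /sweep /= rev_cons -cats1 foldr_cat /= mulmx1.
by elim: (rev _) => [|k s IH] /=; rewrite ?mul1mx // IH mulmxA.
Qed.

Lemma one_sub_sweep a b : 1%:M - sweep a b =
  \sum_(j < b) sweep (a + j).+1 (b - j.+1) *m (1%:M - proj (a + j)).
Proof.
elim: b a => [|b IH] a; first by rewrite big_ord0 sweep0 subrr.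
rewrite big_ord_recl /= addn0 subSS subn0 sweepSl.
have -> : 1%:M - sweep a.+1 b *m proj a =
    (1%:M - sweep a.+1 b) + sweep a.+1 b *m (1%:M - proj a).
  by move: (sweep _ _) (proj a) => S P; rewrite mulmxBr mulmx1 addrA subrK.
rewrite IH addrC; congr (_ + _); apply: eq_bigr => j _.
by rewrite /bump /= add1n subSS addSnnS.
Qed.

Lemma Qj_sweep (j : 'I_m) : Qj A u j = sweep j.+1 (m - j.+1).
Proof.
rewrite /Qj /sweep.
have -> : (fun (k : 'I_m) (Q : 'M[R]_n) => Pk A (u 0 k) k *m Q) =
    (fun (k : 'I_m) Q => proj k *m Q).
  by apply: funext => k; rewrite Pk_proj.
rewrite -(foldr_map val (fun k Q => proj k *m Q)) map_rev -filter_map val_enum_ord.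
by rewrite filter_iota_geq.
Qed.

Lemma AS_gain_mulmx (C : 'M[R]_m) : AS A u = C *m A ->
  A^T *m C^T *m diag_mx u *m diag_mx (\row_i (rownorm2 A i)^-1) *m A =
  1%:M - sweep 0 m.
Proof.
move=> AS_CA; rewrite -trmx_mul -AS_CA -[_ *m diag_mx _ *m diag_mx _]mulmxA.
rewrite mulmx_diag trmx_mul_diag_sum one_sub_sweep; apply: eq_bigr => j _.
rewrite add0n -Qj_sweep /proj opprB addrC subrK /relax arow_ord relax_mu_ord.
rewrite -scalemxAr mulmxA !mxE; congr (_ *: (_ *m _)); last by rewrite trmxK.
by apply/matrixP => a b; rewrite !mxE (ord1 b).
Qed.

Lemma proj_mulmx j x :
  proj j *m x = x - (relax j * dotv (arow j) x) *: arow j.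
Proof.
rewrite /proj mulmxBl mul1mx -scalemxAl -mulmxA trmx_mul_dotv mul_mx_scalar.
by rewrite scalerA mulrC.
Qed.

(* The residual of equation [j] at the moment the sweep reaches row [j]. *)
Definition resid v (j : nat) : R := dotv (arow j) (sweep 0 j *m v).
Definition weight (j : nat) : R := 2 * relax j - relax j ^+ 2 * norm2sq (arow j).

Lemma sweepS_mulmx v j :
  sweep 0 j.+1 *m v = sweep 0 j *m v - (relax j * resid v j) *: arow j.
Proof. by rewrite sweepSr add0n -mulmxA proj_mulmx. Qed.

Lemma norm2sq_sweep v k :
  norm2sq (sweep 0 k *m v) = norm2sq v - \sum_(j < k) resid v j ^+ 2 * weight j.
Proof.
elim: k => [|k IH]; first by rewrite big_ord0 subr0 sweep0 mul1mx.
by rewrite big_ord_recr /= sweepS_mulmx norm2sq_sub_scale IH opprD addrA.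
Qed.

Lemma sweep_mulmx_expand v k :
  sweep 0 k *m v = v - \sum_(i < k) (relax i * resid v i) *: arow i.
Proof.
elim: k => [|k IH]; first by rewrite big_ord0 subr0 sweep0 mul1mx.
by rewrite big_ord_recr /= sweepS_mulmx IH opprD addrA.
Qed.

Lemma dotv_sweep a v k :
  dotv a v = dotv a (sweep 0 k *m v) +
    \sum_(i < k) relax i * resid v i * dotv a (arow i).
Proof.
rewrite sweep_mulmx_expand !dotvE mulmxBr mulmx_sumr.
under eq_bigr do rewrite -scalemxAr.
move: (a^T *m v) => X.
rewrite [(X - _) 0 0]mxE mxE summxE.
under eq_bigr do rewrite mxE -dotvE.
by rewrite subrK.
Qed.

Lemma mulmx_dotv_row v (j : 'I_m) : (A *m v) j 0 = dotv (arow j) v.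
Proof. by rewrite mxE /dotv; apply: eq_bigr => l _; rewrite arow_ord !mxE. Qed.

Lemma resid_out v j : (m <= j)%N -> resid v j = 0.
Proof. by move=> mj; rewrite /resid /arow insubF ?dot0v // ltnNge mj. Qed.

Lemma weight_gt0 (j : 'I_m) : row j A != 0 -> 0 < u 0 j < 2 -> 0 < weight j.
Proof.
move=> Aj_neq0 /andP[u_gt0 u_lt2].
have a_gt0 : 0 < norm2sq (arow j).
  rewrite lt_def norm2sq_ge0 andbT; apply: contraNneq Aj_neq0.
  by rewrite arow_ord => /norm2sq_eq0 /(congr1 trmx); rewrite trmxK trmx0 => ->.
have -> : weight j = relax j * (2 - u 0 j).
  by rewrite /weight /relax relax_mu_ord; field; rewrite gt_eqF.
by rewrite mulr_gt0 ?subr_gt0 // /relax relax_mu_ord divr_gt0.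
Qed.

End Sweep.

Section SweepIteration.
Variables (R : realType) (m n : nat) (A : 'M[R]_(m, n)) (u : 'rV[R]_m).
Hypothesis rowA_neq0 : forall i : 'I_m, row i A != 0.
Hypothesis u_range : forall i : 'I_m, 0 < u 0 i < 2.
Variable e : nat -> 'cV[R]_n.
Hypothesis eS : forall k, e k.+1 = sweep A u 0 m *m e k.

(* The squared norms of the iterates decrease by the weighted squared
   residuals of a sweep, so these residuals are summable and tend to zero. *)
Lemma resid_iter_cvg0 j : resid A u (e k) j @[k --> \oo] --> 0.
Proof.
have [jm|mj] := ltnP j m; last first.
  by under eq_cvg do rewrite resid_out //; exact: cvg_cst.
have decr_cvg : (\sum_(i < m) resid A u (e k) i ^+ 2 * weight A u i) @[k --> \oo] --> 0.
  apply: (@decrements_cvg0 _ (fun k => norm2sq (e k))) => k.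
  - exact: norm2sq_ge0.
  - by apply: sumr_ge0 => i _; rewrite mulr_ge0 ?sqr_ge0 ?ltW ?weight_gt0.
  - by rewrite eS norm2sq_sweep.
exact: (weighted_sqr_sum_cvg0 (fun i => weight_gt0 (rowA_neq0 i) (u_range i))
          decr_cvg (Ordinal jm)).
Qed.

(* Residual [j] of [A e_k] is the residual met by the sweep plus a combination
   of the earlier residuals. *)
Lemma mulmx_iter_cvg0 : A *m e k @[k --> \oo] --> (0 : 'cV[R]_m).
Proof.
apply: cvg_mx_entries => j i0; rewrite (ord1 i0) mxE -[X in _ --> X]addr0.
under eq_cvg do rewrite mulmx_dotv_row (dotv_sweep A u _ _ j).
apply: cvgD; first exact: resid_iter_cvg0.
rewrite -[X in _ --> X](@big1 _ 0 +%R _ (index_enum 'I_j) predT (fun=> 0)) //.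
apply: (@cvg_big _ _ _ _ predT add_continuous) => i _.
rewrite -[X in _ --> X](mul0r (dotv (arow A j) (arow A i))) -(mulr0 (relax A u i)).
by apply: cvgMr_tmp; apply: cvgMl_tmp; exact: resid_iter_cvg0.
Qed.

End SweepIteration.

Theorem theorem3p12 (R : realType) (m n : nat) (A : 'M[R]_(m, n))
  (b : 'cV[R]_m) (u : 'rV[R]_m) (C : 'M[R]_m) (xd : 'cV[R]_n)
  (PN : 'M[R]_n) (y : nat -> 'cV[R]_n) :
  (forall i : 'I_m, row i A != 0) ->
  (exists x : 'cV[R]_n, A *m x = b) ->
  min_norm_ls_solution A b xd ->
  (forall i : 'I_m, 0 < u 0 i < 2) ->
  unit_upper_triangular C ->
  AS A u = C *m A ->
  orth_proj_null A PN ->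
  (forall k : nat, y k.+1 = y k + A^T *m C^T *m diag_mx u
       *m diag_mx (\row_i (rownorm2 A i)^-1) *m (b - A *m y k)) ->
  y @ \oo --> xd + PN *m y 0%N.
Proof.
move=> rowA_neq0 consistent xd_min u_range _ AS_CA PN_proj yS.
set z := xd + PN *m y 0%N.
have Az : A *m z = b.
  by rewrite mulmxDr (ls_solution_consistent consistent xd_min.1) (PN_proj _).1 addr0.
pose e k := y k - z.
have eS k : e k.+1 = e k - A^T *m (C^T *m diag_mx u
       *m diag_mx (\row_i (rownorm2 A i)^-1) *m (A *m e k)).
  by rewrite /e yS -Az -mulmxBr -(opprB (y k)) !mulmxN !mulmxA addrAC.
have e_sweep k : e k.+1 = sweep A u 0 m *m e k.
  by rewrite eS !mulmxA (AS_gain_mulmx AS_CA) mulmxBl mul1mx opprB addrC subrK.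
have e_perp k : perp_ker A (e k).
  elim: k => [|k IH]; last by rewrite eS; exact/perp_kerD/perp_kerN/perp_ker_trmx_mul.
  rewrite /e /z opprD addrCA; apply: perp_kerD; last exact: (PN_proj _).2.
  exact/perp_kerN/(min_norm_ls_perp_ker xd_min).
have [G e_factor] := perp_ker_factor PN_proj.
have e_cvg : e @ \oo --> (0 : 'cV[R]_n).
  have -> : e = fun k => G *m (A *m e k) by apply: funext => k; exact: e_factor.
  rewrite -[X in _ --> X](mulmx0 _ G).
  by apply: cvg_mulmxl; exact: (mulmx_iter_cvg0 rowA_neq0 u_range e_sweep).
have -> : y = fun k => e k + z by apply: funext => k; rewrite subrK.
by rewrite -[X in _ --> X]add0r; apply: cvgD => //; exact: cvg_cst.
Qed.
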